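(* For each arrival $t\ge 1$ and each level $0\le i\le L^{(t)}+1$, we have $\mathscr{C}^{(t-1)}_{i}\preceq\mathscr{C}^{(t)}_{i}$.
   Context: An offline instance $(\mathcal{M},D)$ consists of demand pairs $D=\{(u_j,v_j)\}$ over a terminal set $V=\{u_j,v_j\}$, each terminal in exactly one pair (the other element of its pair is its mate), and a metric $\mathcal{M}$ on $V$ with all distances at least $1$, viewed as the complete graph on $V$ with edge costs equal to distances. A clustering of $V$ is a partition of $V$; for a clustering $\mathscr{C}$, $\mathcal{M}/\mathscr{C}$ denotes the shortest-path metric on $\mathscr{C}$ of the graph obtained from the complete weighted graph on $V$ by contracting each cluster into a single vertex. For clusterings $\mathscr{C}_1$ of $V_1$ and $\mathscr{C}_2$ of $V_2$, write $\mathscr{C}_1\preceq\mathscr{C}_2$ if every cluster of $\mathscr{C}_1$ is contained in some cluster of $\mathscr{C}_2$. Clustering procedure: ${\sf level}(v)=\lceil\log_2{\sf dist}_{\mathcal{M}}(v,\text{mate of }v)\rceil$, ${\sf level}(C)=\max_{v\in C}{\sf level}(v)$, $L=\max_{v\in V}{\sf level}(v)$. $\mathscr{C}_0$ is the clustering into singletons. For $i=0,\dots,L$: a cluster $C\in\mathscr{C}_i$ is $i$-active if ${\sf level}(C)\ge i$; $H_i$ is the graph whose vertices are the $i$-active clusters of $\mathscr{C}_i$, with an edge between distinct $C_1,C_2$ iff ${\sf dist}_{\mathcal{M}/\mathscr{C}_i}(C_1,C_2)<2^{i+1}$; $\mathscr{C}_{i+1}$ consists of all non-$i$-active clusters of $\mathscr{C}_i$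 together with, for each connected component $Q$ of $H_i$, the union of the clusters in $Q$. Online setting: pairs $(u^{(1)},v^{(1)}),\dots,(u^{(n)},v^{(n)})$ arrive in order; for $1\le t\le n$ the instance $(\mathcal{M}^{(t)},D^{(t)})$ consists of the first $t$ pairs and the restriction of the metric to their terminals $V^{(t)}$. Running the procedure on it yields $L^{(t)}$, $\mathscr{C}^{(t)}_i$, $H^{(t)}_i$; for $i\ge L^{(t)}+1$ set $\mathscr{C}^{(t)}_i:=\mathscr{C}^{(t)}_{L^{(t)}+1}$ and $H^{(t)}_i$ empty. For $t=0$, $L^{(0)}=0$ and every $\mathscr{C}^{(0)}_i$ and $H^{(0)}_i$ is empty. *)

From HB Require Import structures.
From mathcomp Require Import all_boot all_order all_algebra.
From mathcomp Require Import boolp reals exp.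
Set Implicit Arguments. Unset Strict Implicit. Unset Printing Implicit Defensive.
Import Order.TTheory GRing.Theory Num.Theory.
Local Open Scope ring_scope.

Section Clustering.
Variables (R : realType) (n : nat) (d : 'I_(2 * n) -> 'I_(2 * n) -> R).
Local Notation T := ('I_(2 * n)).

(* Terminals are encoded as 0,...,2n-1; the j-th arriving pair (j = 0..n-1)
   is (u^(j+1), v^(j+1)) = (2j, 2j+1).  The mate of 2j is 2j+1 and vice versa. *)
Definition mate_nat (k : nat) : nat := if odd k then k.-1 else k.+1.
Definition mate (x : T) : T := insubd x (mate_nat x).

Definition Vt (t : nat) : {set T} := [set x : T | (x < 2 * t)%N].

(* level(v) = ceil(log_2 dist(v, mate v)) (a nonnegative integer since dist >= 1) *)
Definition level (v : T) : nat :=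
  `| Num.ceil (ln (d v (mate v)) / ln 2) |%N.
Definition clevel (C : {set T}) : nat := (\max_(v in C) level v)%N.
Definition Ltop (t : nat) : nat := (\max_(v in Vt t) level v)%N.

(* Contracted metric M/C: shortest-path distance between clusters in the graph
   obtained from the complete weighted graph on cover C by contracting each
   cluster.  A walk in the contracted graph is a sequence of original edges
   (x_1,y_1),...,(x_k,y_k) with x_1 in A, y_k in B, and y_j, x_(j+1) in a
   common cluster; its length is the sum of d x_j y_j. *)
Definition same_cluster (C : {set {set T}}) (x y : T) : Prop :=
  exists2 X, X \in C & (x \in X) && (y \in X).

Definition cwalk (C : {set {set T}}) (A B : {set T}) (s : seq (T * T)) : Prop :=
  match s with
  | [::] => A = B
  | e :: _ =>
      [/\ e.1 \in A, (last e s).2 \in B,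
          (forall j, (j.+1 < size s)%N ->
                     same_cluster C (nth e s j).2 (nth e s j.+1).1) &
          (forall x, x \in s -> (x.1 \in cover C) && (x.2 \in cover C))]
  end.

Definition cdist_lt (C : {set {set T}}) (A B : {set T}) (r : R) : Prop :=
  exists2 s, cwalk C A B s & \sum_(e <- s) d e.1 e.2 < r.

Definition active (i : nat) (C : {set {set T}}) : {set {set T}} :=
  [set X in C | (i <= clevel X)%N].

Definition Hedge (i : nat) (C : {set {set T}}) : rel {set T} :=
  fun X Y => [&& X \in active i C, Y \in active i C, X != Y &
                 `[< cdist_lt C X Y (2 ^+ i.+1) >] ].

Definition step (i : nat) (C : {set {set T}}) : {set {set T}} :=
  [set X in C | ~~ (i <= clevel X)%N] :|:
  [set (\bigcup_(Y | connect (Hedge i C) X Y) Y) | X in active i C].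

(* C^(t)_i, with C^(t)_i := C^(t)_(L^(t)+1) for i >= L^(t)+1. *)
Fixpoint clust (t i : nat) : {set {set T}} :=
  match i with
  | 0 => [set [set x] | x in Vt t]
  | i'.+1 => if (i' <= Ltop t)%N then step i' (clust t i') else clust t i'
  end.

End Clustering.

Definition refines (T : finType) (C1 C2 : {set {set T}}) : Prop :=
  forall X, X \in C1 -> exists2 Y, Y \in C2 & X \subset Y.

(* Adding a pair only adds singleton clusters, and refinement is preserved by
   a step of the procedure: if every cluster of P lies in a cluster of Q, then
   the active clusters of P lie in active clusters of Q (levels only grow),
   and a walk of length < r in M/P is also a walk in M/Q, so every edge of
   H_i(P) maps to an edge (or a loop) of H_i(Q); hence each merged component
   of P lies in a merged component of Q.  At the levels where only the larger
   instance still performs a step, that step merely coarsens.  By induction on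
   i, the clusterings are monotone in t. *)
From HB Require Import structures.
From mathcomp Require Import all_boot all_order all_algebra.
From mathcomp Require Import boolp reals exp.
Set Implicit Arguments. Unset Strict Implicit. Unset Printing Implicit Defensive.
Import Order.TTheory GRing.Theory Num.Theory.
Local Open Scope ring_scope.

Section Refinement.
Variable T : finType.
Implicit Types (P Q : {set {set T}}) (X : {set T}).

Lemma refines_trans P Q (S : {set {set T}}) :
  refines P Q -> refines Q S -> refines P S.
Proof.
move=> hPQ hQS X /hPQ [Y /hQS [Z ZS sYZ] sXY]; exists Z => //.
exact: subset_trans sXY sYZ.
Qed.

Lemma refines_cover P Q : refines P Q -> cover P \subset cover Q.
Proof.
move=> hPQ; apply/subsetP => x /bigcupP [X XP xX].
have [Y YQ sXY] := hPQ X XP.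
by apply/bigcupP; exists Y => //; apply: (subsetP sXY).
Qed.

Definition lift_cluster Q X : {set T} := odflt X [pick Y in Q | X \subset Y].

Lemma lift_clusterP P Q X :
  refines P Q -> X \in P -> lift_cluster Q X \in Q /\ X \subset lift_cluster Q X.
Proof.
move=> hPQ XP; rewrite /lift_cluster; case: pickP => [Y /andP[-> ->] //|none].
by have [Y YQ sXY] := hPQ X XP; move: (none Y); rewrite YQ sXY.
Qed.

End Refinement.

Lemma connect_homo (T U : finType) (e : rel T) (e' : rel U) (f : T -> U) :
  (forall x y, e x y -> connect e' (f x) (f y)) ->
  forall x y, connect e x y -> connect e' (f x) (f y).
Proof.
move=> hf x _ /connectP [p ep ->]; elim: p x ep => //= y p IHp x /andP[exy].
by move/IHp; apply: connect_trans; apply: hf.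
Qed.

Section Clustering.
Variables (R : realType) (n : nat) (d : 'I_(2 * n) -> 'I_(2 * n) -> R).
Local Notation T := ('I_(2 * n)).
Implicit Types (P Q C : {set {set T}}) (X Y : {set T}).

Lemma clevelS X Y : X \subset Y -> (clevel d X <= clevel d Y)%N.
Proof.
move=> sXY; apply/bigmax_leqP => v vX; apply: leq_bigmax_cond.
exact: (subsetP sXY).
Qed.

Lemma active_refines i P Q X Y :
  X \in active d i P -> Y \in Q -> X \subset Y -> Y \in active d i Q.
Proof.
rewrite !inE => /andP[_ hX] -> sXY /=.
exact: leq_trans hX (clevelS sXY).
Qed.

Lemma connect_Hedge_active i C X Y :
  X \in active d i C -> connect (Hedge d i C) X Y -> Y \in active d i C.
Proof.
move=> XA /connectP [p hp ->]; elim: p X XA hp => //= Z p IHp X _ /andP[hXZ].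
by apply: IHp; case/and4P: hXZ.
Qed.

Lemma cdist_lt_refines P Q X X' Y Y' r :
  refines P Q -> X \subset X' -> Y \subset Y' -> X != Y ->
  cdist_lt d P X Y r -> cdist_lt d Q X' Y' r.
Proof.
move=> hPQ sX sY neXY [[|e s] /= hw hs]; first by rewrite hw eqxx in neXY.
exists (e :: s) => //; case: hw => hX hY hnext hcov; split.
- exact: (subsetP sX).
- exact: (subsetP sY).
- move=> j /hnext [Z ZP /andP[a b]].
  have [W WQ sZW] := hPQ Z ZP; exists W => //.
  by rewrite !(subsetP sZW).
- move=> x /hcov /andP[a b].
  by rewrite !(subsetP (refines_cover hPQ)).
Qed.

Lemma Hedge_lift i P Q X Y : refines P Q -> Hedge d i P X Y ->
  connect (Hedge d i Q) (lift_cluster Q X) (lift_cluster Q Y).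
Proof.
move=> hPQ /and4P[XA YA neXY /asboolP hXY].
have [XQ sX] := lift_clusterP hPQ (setIdP XA).1.
have [YQ sY] := lift_clusterP hPQ (setIdP YA).1.
have [-> //|ne] := eqVneq (lift_cluster Q X) (lift_cluster Q Y).
apply: connect1; apply/and4P; split => //.
- exact: active_refines XA XQ sX.
- exact: active_refines YA YQ sY.
- by apply/asboolP; apply: cdist_lt_refines hXY.
Qed.

Lemma merged_in_step i C X :
  X \in active d i C ->
  \bigcup_(Y | connect (Hedge d i C) X Y) Y \in step d i C.
Proof. by move=> XA; apply/setUP; right; apply/imsetP; exists X. Qed.

Lemma refines_step i C : refines C (step d i C).
Proof.
move=> X XC; case: (boolP (i <= clevel d X)%N) => hl.
- exists (\bigcup_(Y | connect (Hedge d i C) X Y) Y).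
    by apply: merged_in_step; rewrite inE XC hl.
  exact: (bigcup_max X (connect0 _ _)).
- by exists X => //; apply/setUP; left; rewrite inE XC hl.
Qed.

Lemma step_mono i P Q : refines P Q -> refines (step d i P) (step d i Q).
Proof.
move=> hPQ X /setUP [/setIdP [XP _]|/imsetP [X0 X0A ->]].
  have [Y YQ sXY] := hPQ X XP.
  have [Z ZS sYZ] := refines_step i YQ.
  by exists Z => //; apply: subset_trans sXY sYZ.
have [X0Q sX0] := lift_clusterP hPQ (setIdP X0A).1.
exists (\bigcup_(Y | connect (Hedge d i Q) (lift_cluster Q X0) Y) Y).
  exact/merged_in_step/(active_refines X0A X0Q sX0).
apply/bigcupsP => Y hY.
have YP := (setIdP (connect_Hedge_active X0A hY)).1.
have [_ sY] := lift_clusterP hPQ YP.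
apply: (bigcup_max (lift_cluster Q Y)) sY.
by apply: connect_homo hY => Y1 Y2; apply: Hedge_lift.
Qed.

Lemma subset_Vt s t : (s <= t)%N -> Vt n s \subset Vt n t.
Proof.
move=> hst; apply/subsetP => x; rewrite !inE => h; apply: leq_trans h _.
by rewrite leq_mul2l hst orbT.
Qed.

Lemma leq_Ltop s t : (s <= t)%N -> (Ltop d s <= Ltop d t)%N.
Proof.
move=> hst; apply/bigmax_leqP => v vs; apply: leq_bigmax_cond.
exact: (subsetP (subset_Vt hst)).
Qed.

Lemma clust_mono s t i : (s <= t)%N -> refines (clust d s i) (clust d t i).
Proof.
move=> hst; elim: i => [|i IH] /=.
  move=> _ /imsetP [x xV ->]; exists [set x] => //; apply/imsetP; exists x => //.
  exact: (subsetP (subset_Vt hst)).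
case: ifP => hs; case: ifP => ht.
- exact: step_mono.
- by rewrite (leq_trans hs (leq_Ltop hst)) in ht.
- exact: refines_trans IH (refines_step i (C := clust d t i)).
- exact: IH.
Qed.

End Clustering.

Theorem lemma4p2 (R : realType) (n : nat) (d : 'I_(2 * n) -> 'I_(2 * n) -> R)
  (d_refl : forall x, d x x = 0)
  (d_sym : forall x y, d x y = d y x)
  (d_tri : forall x y z, d x z <= d x y + d y z)
  (d_ge1 : forall x y, x != y -> 1 <= d x y)
  (t i : nat) (ht1 : (1 <= t)%N) (htn : (t <= n)%N)
  (hi : (i <= Ltop d t + 1)%N) :
  refines (clust d (t - 1) i) (clust d t i).
Proof. exact: clust_mono (leq_subr 1 t). Qed.
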